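(* Let $1\le r\le s\le t$ and let $u=ABCd$, $v=A'B'C'd'$ be distinct vertices of $E3C(r,s,t)$ with $B=B'$, $C=C'$ and $d=d'$ (any $d\in\{0,1,2\}$). Then there exist $2r+2$ pairwise internally disjoint $u$–$v$ paths in $E3C(r,s,t)$, each of length at most $r+6$.
   Context: The exchanged 3-ary $n$-cube $E3C(r,s,t)$ ($r,s,t\ge1$, $n=r+s+t+1$): vertices are strings written $x=ABCd$ with $A\in\{0,1,2\}^r$, $B\in\{0,1,2\}^s$, $C\in\{0,1,2\}^t$, $d\in\{0,1,2\}$. Two distinct vertices $x=ABCd$, $y=A'B'C'd'$ are adjacent iff one of: (E0) $A=A',B=B',C=C'$ and $d\ne d'$; (E1) $d=d'=0$, $A=A'$, $B=B'$ and $C,C'$ differ in exactly one position; (E2) $d=d'=1$, $A=A'$, $C=C'$ and $B,B'$ differ in exactly one position; (E3) $d=d'=2$, $B=B'$, $C=C'$ and $A,A'$ differ in exactly one position. Paths are internally disjoint if they share no vertices other than their endpoints; length = number of edges. *)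

From mathcomp Require Import all_boot.
Set Implicit Arguments. Unset Strict Implicit. Unset Printing Implicit Defensive.

Definition E3Cvert (r s t : nat) : finType :=
  ({ffun 'I_r -> 'I_3} * {ffun 'I_s -> 'I_3} * {ffun 'I_t -> 'I_3} * 'I_3)%type.

Section E3C.
Variables r s t : nat.

Definition vA (x : E3Cvert r s t) : {ffun 'I_r -> 'I_3} := x.1.1.1.
Definition vB (x : E3Cvert r s t) : {ffun 'I_s -> 'I_3} := x.1.1.2.
Definition vC (x : E3Cvert r s t) : {ffun 'I_t -> 'I_3} := x.1.2.
Definition vd (x : E3Cvert r s t) : 'I_3 := x.2.

Definition diff1 (n : nat) (f g : {ffun 'I_n -> 'I_3}) : bool :=
  #|[set i | f i != g i]| == 1.

Definition E3C_adj (x y : E3Cvert r s t) : bool :=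
  [|| [&& vA x == vA y, vB x == vB y, vC x == vC y & vd x != vd y]
    , [&& (vd x == 0 :> nat), (vd y == 0 :> nat), vA x == vA y, vB x == vB y
          & diff1 (vC x) (vC y)]
    , [&& (vd x == 1 :> nat), (vd y == 1 :> nat), vA x == vA y, vC x == vC y
          & diff1 (vB x) (vB y)]
    | [&& (vd x == 2 :> nat), (vd y == 2 :> nat), vB x == vB y, vC x == vC y
          & diff1 (vA x) (vA y)] ].
End E3C.

(* A (simple) u-v path in a graph with adjacency e, written as the vertex
   sequence u :: p; its length is size p. *)
Definition is_uv_path (T : eqType) (e : rel T) (u v : T) (p : seq T) : Prop :=
  [/\ path e u p, last u p = v & uniq (u :: p)].

Definition internal_vertices (T : eqType) (u v : T) (p : seq T) : seq T :=
  [seq x <- p | (x != u) && (x != v)].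

Definition internally_disjoint (T : eqType) (u v : T) (p q : seq T) : Prop :=
  forall x, x \in internal_vertices u v p -> x \notin internal_vertices u v q.

From mathcomp Require Import all_boot zify.
Set Implicit Arguments. Unset Strict Implicit. Unset Printing Implicit Defensive.

(* Write u = (A, B, C, d) and v = (A', B, C, d).  Only layer 2 changes the
   A-part, so the paths climb to layer 2, correct one by one the coordinates
   where A and A' differ, and come back.  For d = 0, each of the 2r paths first
   changes one of the first r coordinates of C (in one of two ways) and keeps
   this copy of C throughout; the two remaining paths climb directly, or
   through layer 1 after changing one coordinate of B.  The case d = 1 is the
   case d = 0 up to the isomorphism exchanging B with C and layer 0 with
   layer 1.  For d = 2, the 2r neighbours of u in layer 2 change one
   coordinate i of A.  If the new value differs from A' i, the path stays in
   layer 2 with this value frozen.  Otherwise it goes down to layer 0, changes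
   coordinate i of C, walks to a string Y i next to A' and comes back; two
   more paths pass through layers 0 and 1.  In every case an internal vertex
   determines the only path through it, which gives internal disjointness. *)

Section UVPaths.
Variables (T : eqType) (e : rel T).

Definition disjoint_uv_paths (u v : T) (N M : nat) : Prop :=
  exists P : 'I_N -> seq T,
    (forall i, is_uv_path e u v (P i) /\ size (P i) <= M) /\
    (forall i j, i != j -> P i != P j /\ internally_disjoint u v (P i) (P j)).

Lemma size_shorten (x : T) p : size (shorten x p) <= size p.
Proof.
elim: p x => [|y p IHp] x //=.
by case: ifP => _; [apply: leq_trans (IHp x) _ | rewrite ltnS].
Qed.

Lemma head_shorten (x : T) p : x \notin p -> head x (shorten x p) = head x p.
Proof. by case: p => //= y p /negbTE ->. Qed.

(* The paths are the walks W n with their loops removed; the condition on first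
   vertices also separates walks without internal vertices. *)
Lemma disjoint_uv_paths_of_walks (I : finType) (L : eqType) (u v : T) N M
    (W : I -> seq T) (key : T -> L) (label : I -> L) :
  #|I| = N -> u != v -> injective label ->
  (forall n, path e u (W n)) -> (forall n, last u (W n) = v) ->
  (forall n, size (W n) <= M) ->
  (forall n, {in W n, forall x, x != v -> key x = label n}) ->
  (forall n, key (head u (W n)) = label n) ->
  (forall n, key u != label n) ->
  disjoint_uv_paths u v N M.
Proof.
move=> cardI uv label_inj Wpath Wlast Wsize Wkey Whead key_u.
have u_notin n : u \notin W n.
  by apply/negP => /Wkey /(_ uv) /eqP; rewrite (negbTE (key_u n)).
pose idx k := enum_val (cast_ord (esym cardI) k).
have idx_inj : injective idx by move=> k k' /enum_val_inj /cast_ord_inj.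
have sub_W n : {subset shorten u (W n) <= W n} by case: (shortenP (Wpath n)).
exists (fun k => shorten u (W (idx k))); split => [k | k k' neq_kk'].
  split; last exact: leq_trans (size_shorten _ _) (Wsize _).
  by have := Wlast (idx k); case: (shortenP (Wpath (idx k))) => p' ? ? _ <-.
have neq_n : idx k != idx k' by rewrite (inj_eq idx_inj).
split.
  apply: contra neq_n => /eqP eqP'; rewrite -(inj_eq label_inj).
  rewrite -(Whead (idx k)) -(Whead (idx k')) -(head_shorten (u_notin (idx k))) eqP'.
  by rewrite head_shorten ?u_notin.
move=> x; rewrite !mem_filter => /andP[/andP[_ xv] /sub_W xW].
apply/negP => /andP[_ /sub_W xW']; move: neq_n.
by rewrite -(inj_eq label_inj) -(Wkey _ x xW xv) -(Wkey _ x xW' xv) eqxx.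
Qed.

End UVPaths.

Lemma disjoint_uv_paths_map (T T' : eqType) (e : rel T) (e' : rel T') (f : T -> T')
    u v N M :
  injective f -> {homo f : x y / e x y >-> e' x y} ->
  disjoint_uv_paths e u v N M -> disjoint_uv_paths e' (f u) (f v) N M.
Proof.
move=> f_inj f_homo [P [Ppath Pdisj]].
have internal_map p :
    internal_vertices (f u) (f v) (map f p) = map f (internal_vertices u v p).
  rewrite /internal_vertices filter_map; congr map.
  by apply: eq_filter => x /=; rewrite !inj_eq.
exists (fun i => map f (P i)); split => [i | i j neq_ij].
  have [[Pp Pl Pu] Ps] := Ppath i; rewrite size_map; split => //; split.
  - by rewrite path_map; apply: sub_path Pp => x y /f_homo.
  - by rewrite last_map Pl.
  - by rewrite -map_cons map_inj_uniq.
have [neqP disjP] := Pdisj i j neq_ij; split; first by rewrite (inj_eq (inj_map f_inj)).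
by move=> y; rewrite !internal_map => /mapP[x /disjP xj ->]; rewrite mem_map.
Qed.

Lemma pick_unique (T : finType) (P : pred T) x :
  P x -> (forall y, P y -> y = x) -> [pick y | P y] = Some x.
Proof. by move=> Px Pu; case: pickP => [y /Pu -> // | /(_ x)]; rewrite Px. Qed.

Lemma next_neq (T : eqType) (p : seq T) x y :
  uniq p -> x \in p -> y \in p -> y != x -> next p x != x.
Proof.
move=> up xp yp neq_yx; rewrite next_nth xp.
case: p up xp yp => [//|z q] up xp yp; set i := index x (z :: q).
have lt_i : i < size (z :: q) by rewrite index_mem.
case: (ltnP i (size q)) => [lt_iq | le_qi].
  rewrite -[nth z q i]/(nth z (z :: q) i.+1) -(nth_index z xp) nth_uniq //.
  by rewrite -/i gtn_eqF.
rewrite nth_default //; apply: contra neq_yx => /eqP z_x.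
have i0 : i = 0 by rewrite /i -z_x /= eqxx.
by move: le_qi yp; rewrite i0 leqn0 => /nilP ->; rewrite mem_seq1 z_x.
Qed.

Section Strings.
Variable n : nat.
Implicit Types (X Y Z : {ffun 'I_n -> 'I_3}) (j k : 'I_n).

Definition upd X j (a : 'I_3) : {ffun 'I_n -> 'I_3} :=
  [ffun k => if k == j then a else X k].

Lemma updE X j a k : upd X j a k = if k == j then a else X k.
Proof. by rewrite ffunE. Qed.

Lemma upd_inj X Y j k : X k != Y k -> upd X j (Y j) = upd X k (Y k) -> j = k.
Proof.
move=> nXYk /(congr1 (fun Z => Z k)); rewrite !updE eqxx.
by case: (eqVneq k j) => // _ /eqP; rewrite (negbTE nXYk).
Qed.

Lemma diff1_sym X Y : diff1 X Y = diff1 Y X.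
Proof.
by rewrite /diff1; congr (_ == 1); apply: eq_card => j; rewrite !inE eq_sym.
Qed.

Lemma diff1_upd X j a : a != X j -> diff1 X (upd X j a).
Proof.
move=> aXj; rewrite /diff1 (_ : [set k | _] = [set j]) ?cards1 //.
apply/setP => k; rewrite !inE updE.
by case: (eqVneq k j) => [->|]; rewrite ?eqxx // eq_sym.
Qed.

Definition hamming X Y := #|[set k | X k != Y k]|.

Lemma hamming_le X Y : hamming X Y <= n.
Proof. by apply: leq_trans (max_card _) _; rewrite card_ord. Qed.

Fixpoint fix_coords X Y (l : seq 'I_n) : seq {ffun 'I_n -> 'I_3} :=
  if l is j :: l' then upd X j (Y j) :: fix_coords (upd X j (Y j)) Y l' else [::].

Definition hamming_walk X Y := fix_coords X Y (enum [pred j | X j != Y j]).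

Lemma fix_coords_path X Y l :
  uniq l -> {in l, forall j, X j != Y j} -> path (@diff1 n) X (fix_coords X Y l).
Proof.
elim: l X => [|j l IHl] X //= /andP[jl ul] neqXY.
rewrite diff1_upd ?(eq_sym (Y j)) ?neqXY ?mem_head //=.
apply: IHl => // k kl; rewrite updE; case: (eqVneq k j) => [eq_kj|_].
  by move: jl; rewrite -eq_kj kl.
by apply: neqXY; rewrite inE kl orbT.
Qed.

Lemma last_fix_coords X Y l :
  (forall j, X j != Y j -> j \in l) -> last X (fix_coords X Y l) = Y.
Proof.
elim: l X => [|j l IHl] X /= lXY.
  by apply/ffunP => k; apply/eqP; case: eqVneq (lXY k) => // _ /(_ isT).
apply: IHl => k; rewrite updE; case: (eqVneq k j) => [->|neq_kj]; first by rewrite eqxx.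
by move/lXY; rewrite inE (negbTE neq_kj).
Qed.

Lemma fix_coords_between X Y l Z :
  Z \in X :: fix_coords X Y l -> forall k, (Z k == X k) || (Z k == Y k).
Proof.
elim: l X => [|j l IHl] X; first by rewrite mem_seq1 => /eqP -> k; rewrite eqxx.
rewrite inE => /orP[/eqP -> k|/IHl ZXY k]; first by rewrite eqxx.
move: (ZXY k); rewrite updE.
by case: (eqVneq k j) => [->|//]; rewrite orbb => ->; rewrite orbT.
Qed.

Lemma hamming_walk_path X Y : path (@diff1 n) X (hamming_walk X Y).
Proof. by apply: fix_coords_path => [|j]; rewrite ?enum_uniq ?mem_enum. Qed.

Lemma last_hamming_walk X Y : last X (hamming_walk X Y) = Y.
Proof. by apply: last_fix_coords => j; rewrite mem_enum. Qed.

Lemma size_hamming_walk X Y : size (hamming_walk X Y) = hamming X Y.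
Proof.
have size_fix l X' : size (fix_coords X' Y l) = size l.
  by elim: l X' => //= j l IHl X'; rewrite IHl.
by rewrite size_fix /hamming cardsE cardE.
Qed.

Lemma hamming_walk_between X Y Z :
  Z \in X :: hamming_walk X Y -> forall k, (Z k == X k) || (Z k == Y k).
Proof. exact: fix_coords_between. Qed.

Definition other (b : bool) (x : 'I_3) : 'I_3 := if b then ordS x else ord_pred x.

Lemma other_neq b x : other b x != x.
Proof. by case: b; case: x => [[|[|[|//]]] ?]; apply/eqP => /(congr1 val). Qed.

Lemma other_inj x : injective (other^~ x).
Proof. by case: x => [[|[|[|//]]] ?] [] [] // /(congr1 val). Qed.

Definition flip X j b := upd X j (other b (X j)).

Lemma flip_at X j b : flip X j b j = other b (X j).
Proof. by rewrite updE eqxx. Qed.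

Lemma flip_neq X j b : flip X j b != X.
Proof. by apply/eqP => /(congr1 (fun Z => Z j)); rewrite flip_at; apply/eqP/other_neq. Qed.

Lemma diff1_flip X j b : diff1 X (flip X j b).
Proof. exact/diff1_upd/other_neq. Qed.

Lemma flip_inj X j j' b b' : flip X j b = flip X j' b' -> j = j' /\ b = b'.
Proof.
move/(congr1 (fun Z => Z j)); rewrite flip_at updE.
case: (eqVneq j j') => [<- /other_inj //|_ /eqP]; by rewrite (negbTE (other_neq _ _)).
Qed.

End Strings.

Definition d0 : 'I_3 := ord0.
Definition d1 : 'I_3 := Ordinal (isT : 1 < 3).
Definition d2 : 'I_3 := ord_max.

Section E3CGraph.
Variables r s t : nat.
Notation V := (E3Cvert r s t).
Notation adj := (@E3C_adj r s t).
Implicit Types (A X Y Z : {ffun 'I_r -> 'I_3}) (B : {ffun 'I_s -> 'I_3})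
  (C : {ffun 'I_t -> 'I_3}) (x : V).

Lemma E3C_adj_sym : symmetric adj.
Proof.
suff adj_sym x y : adj x y -> adj y x by move=> x y; apply/idP/idP; apply: adj_sym.
rewrite /E3C_adj => /or4P[/and4P[/eqP-> /eqP-> /eqP-> ndd]|
  /and5P[-> -> /eqP-> /eqP-> dCC]|/and5P[-> -> /eqP-> /eqP-> dBB]|
  /and5P[-> -> /eqP-> /eqP-> dAA]].
- by rewrite !eqxx eq_sym ndd.
- by rewrite !eqxx diff1_sym dCC orbT.
- by rewrite !eqxx diff1_sym dBB !orbT.
- by rewrite !eqxx diff1_sym dAA !orbT.
Qed.

Lemma adj_layer A B C d d' : d != d' -> adj (A, B, C, d) (A, B, C, d').
Proof. by move=> neq_dd'; rewrite /E3C_adj /vA /vB /vC /vd /= !eqxx neq_dd'. Qed.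

Lemma adj_d0 A B C C' : diff1 C C' -> adj (A, B, C, d0) (A, B, C', d0).
Proof. by move=> dCC'; rewrite /E3C_adj /vA /vB /vC /vd /= !eqxx dCC' orbT. Qed.

Lemma adj_d1 A B B' C : diff1 B B' -> adj (A, B, C, d1) (A, B', C, d1).
Proof. by move=> dBB'; rewrite /E3C_adj /vA /vB /vC /vd /= !eqxx dBB' !orbT. Qed.

Lemma adj_d2 A A' B C : diff1 A A' -> adj (A, B, C, d2) (A', B, C, d2).
Proof. by move=> dAA'; rewrite /E3C_adj /vA /vB /vC /vd /= !eqxx dAA' !orbT. Qed.

Definition layer2 B C Z : V := (Z, B, C, d2).

Lemma layer2_walk_path B C X Y :
  path adj (layer2 B C X) (map (layer2 B C) (hamming_walk X Y)).
Proof.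
rewrite path_map; apply: sub_path (hamming_walk_path X Y) => ? ?; exact: adj_d2.
Qed.

Lemma last_layer2_walk B C X Y :
  last (layer2 B C X) (map (layer2 B C) (hamming_walk X Y)) = layer2 B C Y.
Proof. by rewrite last_map last_hamming_walk. Qed.

Lemma layer2_walk_mem B C X Y x : x \in map (layer2 B C) (X :: hamming_walk X Y) ->
  exists2 Z : {ffun 'I_r -> 'I_3}, (forall k, (Z k == X k) || (Z k == Y k)) & x = layer2 B C Z.
Proof. by move=> /mapP[Z /hamming_walk_between ZXY ->]; exists Z. Qed.

Section Detour.
Variables (B : {ffun 'I_s -> 'I_3}) (C : {ffun 'I_t -> 'I_3}).

Definition detour e B' C' X Y : seq V :=
  (X, B', C', e) :: map (layer2 B' C') (X :: hamming_walk X Y) ++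
    [:: (Y, B', C', e); (Y, B, C, e)].

Definition layer_detour d e B' C' X Y : seq V :=
  (X, B, C, e) :: detour e B' C' X Y ++ [:: (Y, B, C, d)].

Variables (e : 'I_3) (B' : {ffun 'I_s -> 'I_3}) (C' : {ffun 'I_t -> 'I_3}).
Hypotheses (e_neq2 : e != d2) (adj_BC : forall Z, adj (Z, B, C, e) (Z, B', C', e)).

Lemma detour_path X Y : path adj (X, B, C, e) (detour e B' C' X Y).
Proof.
rewrite /= adj_BC adj_layer // cat_path layer2_walk_path last_layer2_walk /=.
by rewrite adj_layer 1?eq_sym // E3C_adj_sym adj_BC.
Qed.

Lemma last_detour x X Y : last x (detour e B' C' X Y) = (Y, B, C, e).
Proof. by rewrite /= last_cat. Qed.

Lemma layer_detour_path d X Y :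
  d != e -> path adj (X, B, C, d) (layer_detour d e B' C' X Y).
Proof.
move=> neq_de; rewrite /layer_detour -cat_cons cat_path last_cons last_detour.
apply/andP; split; last by rewrite /= adj_layer 1?eq_sym.
by apply/andP; split; [exact: adj_layer | exact: detour_path].
Qed.

Lemma last_layer_detour x d X Y : last x (layer_detour d e B' C' X Y) = (Y, B, C, d).
Proof. by rewrite /= last_cat. Qed.

Lemma size_detour X Y : size (detour e B' C' X Y) = hamming X Y + 4.
Proof. by rewrite /= size_cat /= size_map size_hamming_walk !(addnS, addn0). Qed.

Lemma size_layer_detour d X Y :
  size (layer_detour d e B' C' X Y) = hamming X Y + 6.
Proof. by rewrite /= !size_cat /= size_map size_hamming_walk !(addnS, addn0). Qed.

Lemma detour_mem X Y x : x \in detour e B' C' X Y ->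
  x = (Y, B, C, e) \/ vB x = B' /\ vC x = C'.
Proof.
rewrite in_cons mem_cat => /or3P[/eqP->|/layer2_walk_mem[Z _ ->]|]; try by right.
by rewrite !inE => /orP[/eqP->|/eqP->]; [right | left].
Qed.

Lemma layer_detour_mem d X Y x : x \in layer_detour d e B' C' X Y ->
  [\/ x = (X, B, C, e), x = (Y, B, C, e), x = (Y, B, C, d) | vB x = B' /\ vC x = C'].
Proof.
rewrite in_cons mem_cat mem_seq1 => /or3P[/eqP->|/detour_mem[->|]|/eqP->]; by constructor.
Qed.

End Detour.
End E3CGraph.

Definition paths_index r := ('I_r * bool + bool)%type.

Lemma card_paths_index r : #|{: paths_index r}| = 2 * r + 2.
Proof. by rewrite card_sum card_prod !card_bool card_ord mulnC. Qed.

Section PathsD0.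
Variables (r s t : nat) (hrt : r <= t) (k0 : 'I_s).
Variables (A A' : {ffun 'I_r -> 'I_3}) (B : {ffun 'I_s -> 'I_3}) (C : {ffun 'I_t -> 'I_3}).
Hypothesis neq_AA' : A != A'.
Notation V := (E3Cvert r s t).
Notation adj := (@E3C_adj r s t).

Let u : V := (A, B, C, d0).
Let v : V := (A', B, C, d0).
Let Ci (i : 'I_r) b := flip C (widen_ord hrt i) b.

Let routes (n : paths_index r) : seq V :=
  match n with
  | inl (i, b) => detour B C d0 B (Ci i b) A A'
  | inr true => map (layer2 B C) (A :: hamming_walk A A') ++ [:: v]
  | inr false => layer_detour B C d0 d1 (flip B k0 false) C A A'
  end.

Let key (x : V) : {ffun 'I_t -> 'I_3} + 'I_3 :=
  if vB x != B then inr d1 else if vC x != C then inl (vC x) else inr (vd x).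

Let label (n : paths_index r) : {ffun 'I_t -> 'I_3} + 'I_3 :=
  match n with inl (i, b) => inl (Ci i b) | inr b => inr (if b then d2 else d1) end.

Lemma E3C_paths_d0 : disjoint_uv_paths adj u v (2 * r + 2) (r + 6).
Proof.
apply: (@disjoint_uv_paths_of_walks _ _ _ _ _ _ _ _ routes key label (card_paths_index r)).
- by apply: contra neq_AA' => /eqP[->].
- move=> [[i b]|b] [[j c]|c] //= [].
    by move=> /flip_inj[/(congr1 val) /= /ord_inj -> ->].
  by case: b c => [] [].
- case=> [[i b]|[]].
  + by apply: detour_path => // Z; apply/adj_d0/diff1_flip.
  + rewrite /= adj_layer // cat_path layer2_walk_path last_layer2_walk /=.
    by rewrite /v adj_layer.
  + by apply: layer_detour_path => // Z; apply/adj_d1/diff1_flip.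
- by case=> [[i b]|[]]; rewrite ?last_detour ?last_cat ?last_layer_detour.
- move=> n; have := hamming_le A A'.
  case: n => [[i b]|[]]; rewrite ?size_detour ?size_layer_detour //=; try lia.
  by rewrite size_cat size_map /= size_hamming_walk; lia.
- case=> [[i b]|[]] x.
  + case/detour_mem => [->|[xB xC]]; first by rewrite /v eqxx.
    by rewrite /key xB xC eqxx flip_neq.
  + rewrite mem_cat mem_seq1 => /orP[/layer2_walk_mem[Z _ ->] _|/eqP->].
      by rewrite /key /vB /vC /vd /= !eqxx.
    by rewrite /v eqxx.
  + case/layer_detour_mem => [->|->|->|[xB _]]; rewrite ?/v ?eqxx // => _.
    - by rewrite /key /vB /vC /vd /= !eqxx.
    - by rewrite /key /vB /vC /vd /= !eqxx.
    - by rewrite /key xB flip_neq.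
- by case=> [[i b]|[]]; rewrite /key /vB /vC /vd /= ?eqxx ?flip_neq.
- by case=> [[i b]|[]]; rewrite /key /vB /vC /vd /= !eqxx.
Qed.

End PathsD0.

Section PathsD2.
Variables (r s t : nat) (hrt : r <= t) (k0 : 'I_s) (j0 : 'I_t).
Variables (A A' : {ffun 'I_r -> 'I_3}) (B : {ffun 'I_s -> 'I_3}) (C : {ffun 'I_t -> 'I_3}).
Hypothesis neq_AA' : A != A'.
Notation V := (E3Cvert r s t).
Notation adj := (@E3C_adj r s t).
Implicit Types (i j : 'I_r) (Z : {ffun 'I_r -> 'I_3}).

Let u : V := (A, B, C, d2).
Let v : V := (A', B, C, d2).
Let D := [set i | A i != A' i].
Let sigma := next (enum D).
Let X i := upd A i (A' i).
(* Y i reverts coordinate sigma i of A' rather than i: sigma has no fixed point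
   when #|D| > 1, so X i and Y i differ in at most #|D| - 2 coordinates. *)
Let Y i := upd A' (sigma i) (A (sigma i)).
Let Ct i := flip C (widen_ord hrt i) false.
Let C2 := flip C j0 true.
Let B1 := flip B k0 false.

Lemma sigma_mem i : i \in D -> sigma i \in D.
Proof. by rewrite -mem_enum mem_next mem_enum. Qed.

Lemma sigmaK i : prev (enum D) (sigma i) = i.
Proof. exact/prev_next/enum_uniq. Qed.

Lemma X_at i : X i i = A' i.
Proof. by rewrite updE eqxx. Qed.

Lemma sigma_neq i : i \in D -> X i != A' -> sigma i != i.
Proof.
move=> iD neq_XA'.
case: (pickP (fun j => X i j != A' j)) => [j Xj | XA']; last first.
  by case/eqP: neq_XA'; apply/ffunP => j; apply/eqP/negbFE/XA'.
have neq_ji : j != i by apply: contra Xj => /eqP ->; rewrite X_at.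
apply: (next_neq (enum_uniq _)) (neq_ji); rewrite mem_enum //.
by move: Xj; rewrite updE (negbTE neq_ji) inE.
Qed.

Lemma X_neqA i : i \in D -> X i != A.
Proof.
rewrite inE => nAi; apply/eqP => /(congr1 (fun Z => Z i)) /eqP.
by rewrite X_at eq_sym (negbTE nAi).
Qed.

Lemma Y_neqA' i : i \in D -> Y i != A'.
Proof.
move/sigma_mem; rewrite inE => nA; apply/eqP => /(congr1 (fun Z => Z (sigma i))) /eqP.
by rewrite updE eqxx (negbTE nA).
Qed.

Lemma Y_neqA i : i \in D -> X i != A' -> Y i != A.
Proof.
move=> iD /(sigma_neq iD) nsi; apply/eqP => /(congr1 (fun Z => Z i)) /eqP.
rewrite inE in iD; by rewrite updE [i == _]eq_sym (negbTE nsi) eq_sym (negbTE iD).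
Qed.

Lemma X_between i j : (X i j == A j) || (X i j == A' j).
Proof. by rewrite updE; case: (eqVneq j i) => [->|]; rewrite eqxx ?orbT. Qed.

Lemma Y_between i j : (Y i j == A j) || (Y i j == A' j).
Proof. by rewrite updE; case: (eqVneq j (sigma i)) => [->|]; rewrite eqxx ?orbT. Qed.

Lemma hamming_XY i : i \in D -> X i != A' -> hamming (X i) (Y i) + 2 <= #|D|.
Proof.
move=> iD nXA; have nsi := sigma_neq iD nXA; have siD := sigma_mem iD.
have sub : [set k | X i k != Y i k] \subset D :\ i :\ sigma i.
  apply/subsetP => k; rewrite !inE !updE.
  case: (eqVneq k i) => [->|nki]; first by rewrite [i == _]eq_sym (negbTE nsi) eqxx.
  case: (eqVneq k (sigma i)) => [->|nks]; first by rewrite eqxx.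
  by move=> ->.
have := subset_leq_card sub; rewrite /hamming (cardsD1 i D) (cardsD1 (sigma i) (D :\ i)) iD.
by rewrite in_setD1 nsi siD /=; lia.
Qed.

Let owner i : ('I_r * 'I_3) + 'I_3 := inl (i, A' i).

(* A vertex (Z, B, C, e) on one of the walks determines the walk: through a
   coordinate of Z outside {A, A'}, or through Z = X i or Z = Y i. *)
Let decode Z : ('I_r * 'I_3) + 'I_3 :=
  if [pick j | (Z j != A j) && (Z j != A' j)] is Some j then inl (j, Z j)
  else if [pick i in D | Z == X i] is Some i then owner i
  else if [pick j in D | Z == upd A' j (A j)] is Some j then owner (prev (enum D) j)
  else inr d2.

Let key (x : V) : ('I_r * 'I_3) + 'I_3 :=
  if vB x != B then inr d1
  else if vC x == C2 then inr d0
  else if vC x != C then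
    if [pick i | vC x (widen_ord hrt i) != C (widen_ord hrt i)] is Some i
    then owner i else inr d2
  else if vd x == d1 then inr d1
  else if (vd x == d0) && (vA x \in [:: A; A']) then inr d0
  else if vA x == A then inr d2
  else decode (vA x).

Lemma decode_foreign Z i a : Z i = a -> a != A i -> a != A' i ->
  (forall j, j != i -> (Z j == A j) || (Z j == A' j)) -> decode Z = inl (i, a).
Proof.
move=> Zi nAi nA'i Zj; rewrite /decode (@pick_unique _ _ i) ?Zi ?nAi //.
by move=> j; apply: contraTeq => /Zj; case: eqP; case: eqP.
Qed.

Lemma pick_between Z : (forall j, (Z j == A j) || (Z j == A' j)) ->
  [pick j | (Z j != A j) && (Z j != A' j)] = None.
Proof. by move=> Zj; case: pickP => // j; move: (Zj j); case: eqP; case: eqP. Qed.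

Lemma decode_X i : i \in D -> decode (X i) = owner i.
Proof.
move=> iD; rewrite /decode pick_between => [|j]; last exact: X_between.
rewrite (@pick_unique _ _ i) ?iD ?eqxx // => j /andP[_ /eqP /esym].
by apply: upd_inj; rewrite inE in iD.
Qed.

Lemma decode_Y i : i \in D -> X i != A' -> decode (Y i) = owner i.
Proof.
move=> iD nXA; have nsi := sigma_neq iD nXA; have siD := sigma_mem iD.
rewrite /decode pick_between => [|j]; last exact: Y_between.
case: pickP => [k /andP[_ /eqP /(congr1 (fun Z => Z i))] | _].
  rewrite !updE [i == _]eq_sym (negbTE nsi); case: (eqVneq i k) => [-> // | _ /eqP].
  by rewrite inE in iD; rewrite eq_sym (negbTE iD).
rewrite (@pick_unique _ _ (sigma i)) ?siD ?eqxx ?sigmaK // => j /andP[_ /eqP /esym].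
by apply: upd_inj; rewrite inE eq_sym in siD.
Qed.

Lemma C_neqC2 : (C == C2) = false.
Proof. by rewrite eq_sym; apply/negbTE/flip_neq. Qed.

Lemma key_B1 x : vB x = B1 -> key x = inr d1.
Proof. by rewrite /key => ->; rewrite flip_neq. Qed.

Lemma key_C2 x : vB x = B -> vC x = C2 -> key x = inr d0.
Proof. by rewrite /key => -> ->; rewrite !eqxx. Qed.

Lemma key_Ct x i : vB x = B -> vC x = Ct i -> key x = owner i.
Proof.
rewrite /key => -> ->; rewrite eqxx flip_neq /=.
have -> : (Ct i == C2) = false by apply/negbTE/eqP => /flip_inj[_].
rewrite (@pick_unique _ _ i) ?flip_at ?other_neq // => k.
rewrite updE; case: (eqVneq (widen_ord hrt k) (widen_ord hrt i)) => [/(congr1 val)|_].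
  by move=> /= /ord_inj.
by rewrite eqxx.
Qed.

Lemma key_d1 Z : key (Z, B, C, d1) = inr d1.
Proof. by rewrite /key /vB /vC /vd /= C_neqC2 !eqxx. Qed.

Lemma key_d0 Z : Z \in [:: A; A'] -> key (Z, B, C, d0) = inr d0.
Proof. by rewrite /key /vA /vB /vC /vd /= C_neqC2 !eqxx => ->. Qed.

Lemma key_u : key u = inr d2.
Proof. by rewrite /key /u /vA /vB /vC /vd /= C_neqC2 !eqxx. Qed.

Lemma key_decode Z e : e != d1 -> Z != A -> (e == d0) ==> (Z != A') ->
  key (Z, B, C, e) = decode Z.
Proof.
rewrite /key /vA /vB /vC /vd /= C_neqC2 !eqxx /= !inE => /negbTE -> /negbTE ->.
by case: (e == d0) => //= /negbTE ->.
Qed.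

Let route_spec (w : seq V) l := [/\ path adj u w, last u w = v, size w <= r + 6,
  {in w, forall x, x != v -> key x = l} & key (head u w) = l].

Let route2 i a : seq V :=
  map (layer2 B C) (upd A i a :: hamming_walk (upd A i a) (upd A' i a)) ++ [:: v].

Lemma route2_spec i a : a != A i -> a != A' i -> route_spec (route2 i a) (inl (i, a)).
Proof.
move=> nAi nA'i.
have key_Z Z : (forall k, (Z k == upd A i a k) || (Z k == upd A' i a k)) ->
    key (layer2 B C Z) = inl (i, a).
  move=> Zk; have Zi : Z i = a by move: (Zk i); rewrite !updE eqxx orbb => /eqP.
  rewrite key_decode //; last by apply: contra nAi => /eqP <-; rewrite Zi.
  by apply: decode_foreign => // j nji; move: (Zk j); rewrite !updE (negbTE nji).
split.
- rewrite /route2 /= /u adj_d2 ?diff1_upd //.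
  rewrite cat_path layer2_walk_path last_layer2_walk /= andbT.
  by apply: adj_d2; rewrite diff1_sym diff1_upd.
- by rewrite last_cat.
- rewrite size_cat size_map /= size_hamming_walk.
  by have := hamming_le (upd A i a) (upd A' i a); lia.
- move=> x; rewrite mem_cat mem_seq1 => /orP[/layer2_walk_mem[Z Zk ->] _|/eqP ->].
    exact: key_Z.
  by rewrite eqxx.
- by apply: key_Z => k; rewrite eqxx.
Qed.

Let route0 i : seq V :=
  if X i == A' then [:: v]
  else (X i, B, C, d2) :: layer_detour B C d2 d0 B (Ct i) (X i) (Y i) ++ [:: v].

Lemma route0_spec i : i \in D -> route_spec (route0 i) (owner i).
Proof.
move=> iD; have nXA := X_neqA iD.
have adj_uX : adj u (X i, B, C, d2).
  by apply/adj_d2/diff1_upd; rewrite inE eq_sym in iD.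
rewrite /route0; case: eqP => [XA' | /eqP nXA'].
  have key_v : key v = owner i by rewrite /v -XA' key_decode ?decode_X.
  split => //=.
  - by rewrite andbT /v -XA'.
  - by rewrite addnS.
  - by move=> x; rewrite mem_seq1 => /eqP ->; rewrite eqxx.
have key_X e : e != d1 -> key (X i, B, C, e) = owner i.
  by move=> ne; rewrite key_decode ?decode_X ?nXA' ?implybT.
have key_Y e : e != d1 -> key (Y i, B, C, e) = owner i.
  by move=> ne; rewrite key_decode ?decode_Y ?Y_neqA ?Y_neqA' ?implybT.
split.
- rewrite -cat_cons cat_path last_cons last_layer_detour; apply/andP; split.
    apply/andP; split; first exact: adj_uX.
    by apply: layer_detour_path => // Z; exact/adj_d0/diff1_flip.
  rewrite /= andbT; apply/adj_d2; rewrite diff1_sym diff1_upd //.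
  by have := sigma_mem iD; rewrite inE eq_sym.
- by rewrite last_cons last_cat.
- rewrite -cat1s !size_cat size_layer_detour /=.
  have cardD : #|D| <= r by apply: leq_trans (max_card _) _; rewrite card_ord.
  by have := hamming_XY iD nXA'; lia.
- move=> x; rewrite inE mem_cat mem_seq1.
  case/or3P => [/eqP-> _|/layer_detour_mem[->|->|->|[xB xC]] _|/eqP-> ];
    rewrite ?key_X ?key_Y //.
    exact: key_Ct.
  by rewrite eqxx.
- exact: key_X.
Qed.

Lemma layer_route_spec e B' C' l : e != d2 -> (forall Z, adj (Z, B, C, e) (Z, B', C', e)) ->
  key (A, B, C, e) = l -> key (A', B, C, e) = l ->
  (forall x, vB x = B' -> vC x = C' -> key x = l) ->
  route_spec (layer_detour B C d2 e B' C' A A') l.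
Proof.
move=> ne2 adj_BC keyA keyA' keyBC; split => //.
- by apply: layer_detour_path; rewrite // eq_sym.
- by rewrite last_layer_detour.
- by rewrite size_layer_detour; have := hamming_le A A'; lia.
- move=> x /layer_detour_mem[->|->|->|[xB xC]] //; first by rewrite eqxx.
  by move=> _; apply: keyBC.
Qed.

Let routes (n : paths_index r) : seq V :=
  match n with
  | inl (i, b) => if other b (A i) == A' i then route0 i else route2 i (other b (A i))
  | inr true => layer_detour B C d2 d0 B C2 A A'
  | inr false => layer_detour B C d2 d1 B1 C A A'
  end.

Let label (n : paths_index r) : ('I_r * 'I_3) + 'I_3 :=
  match n with inl (i, b) => inl (i, other b (A i)) | inr b => inr (if b then d0 else d1) end.

Lemma routes_spec n : route_spec (routes n) (label n).
Proof.
case: n => [[i b]|[]] /=.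
- case: eqP => [eA' | /eqP nA'].
    rewrite eA'; apply: route0_spec; rewrite inE -eA' eq_sym; exact: other_neq.
  by apply: route2_spec; rewrite ?other_neq.
- apply: layer_route_spec; rewrite ?key_d0 ?inE ?eqxx ?orbT //.
    by move=> Z; apply/adj_d0/diff1_flip.
  by move=> x; apply: key_C2.
- apply: layer_route_spec; rewrite ?key_d1 //.
    by move=> Z; apply/adj_d1/diff1_flip.
  by move=> x xB _; apply: key_B1.
Qed.

Lemma E3C_paths_d2 : disjoint_uv_paths adj u v (2 * r + 2) (r + 6).
Proof.
apply: (@disjoint_uv_paths_of_walks _ _ _ _ _ _ _ _ routes key label (card_paths_index r)).
- by apply: contra neq_AA' => /eqP[->].
- move=> [[i b]|b] [[j c]|c] //= [].
    by move=> <- /other_inj ->.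
  by case: b c => [] [].
1-5: by move=> n; case: (routes_spec n).
by case=> [[i b]|[]]; rewrite key_u.
Qed.

End PathsD2.

Definition swap01 (d : 'I_3) : 'I_3 := if d == d0 then d1 else if d == d1 then d0 else d.

Definition swapBC r s t (x : E3Cvert r s t) : E3Cvert r t s :=
  (vA x, vC x, vB x, swap01 (vd x)).

Lemma swap01K : involutive swap01.
Proof. by case=> [[|[|[|//]]] ?]; apply: val_inj. Qed.

Lemma swapBC_K r s t : cancel (@swapBC r s t) (@swapBC r t s).
Proof. by case=> [[[A B] C] d]; rewrite /swapBC /= swap01K. Qed.

Lemma swapBC_adj r s t (x y : E3Cvert r s t) : E3C_adj (swapBC x) (swapBC y) = E3C_adj x y.
Proof.
case: x y => [[[A B] C] [[|[|[|//]]] ?]] [[[A' B'] C'] [[|[|[|//]]] ?]];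
  rewrite /E3C_adj /swapBC /vA /vB /vC /vd /=;
  by case: (A == A'); case: (B == B'); case: (C == C').
Qed.

Lemma E3C_paths_d1 r s t (hrs : r <= s) (j0 : 'I_t) (A A' : {ffun 'I_r -> 'I_3})
    (B : {ffun 'I_s -> 'I_3}) (C : {ffun 'I_t -> 'I_3}) :
  A != A' -> disjoint_uv_paths (@E3C_adj r s t) (A, B, C, d1) (A', B, C, d1)
    (2 * r + 2) (r + 6).
Proof.
move=> neq_AA'.
have swapBC_homo : {homo @swapBC r t s : x y / E3C_adj x y}.
  by move=> x y; rewrite swapBC_adj.
exact: disjoint_uv_paths_map (can_inj (@swapBC_K r t s)) swapBC_homo
  (E3C_paths_d0 hrs j0 C B neq_AA').
Qed.

Theorem lemma10 (r s t : nat) (hr : 1 <= r) (hrs : r <= s) (hst : s <= t)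
  (u v : E3Cvert r s t) :
  u != v -> vB u = vB v -> vC u = vC v -> vd u = vd v ->
  exists P : 'I_(2 * r + 2) -> seq (E3Cvert r s t),
    (forall i, is_uv_path (@E3C_adj r s t) u v (P i) /\ size (P i) <= r + 6) /\
    (forall i j, i != j -> P i != P j /\ internally_disjoint u v (P i) (P j)).
Proof.
case: u v => [[[A B] C] d] [[[A' B'] C'] d'].
rewrite /vB /vC /vd /= => neq_uv eqB eqC eqd; subst B' C' d'.
have {neq_uv} neq_AA' : A != A' by apply: contra neq_uv => /eqP->.
have hrt := leq_trans hrs hst.
have k0 : 'I_s := Ordinal (leq_trans hr hrs).
have j0 : 'I_t := Ordinal (leq_trans hr hrt).
have [->|->|->] : [\/ d = d0, d = d1 | d = d2].
  case: d => [[|[|[|//]]] ?]; [constructor 1 | constructor 2 | constructor 3];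
  exact: val_inj.
- exact: E3C_paths_d0 hrt k0 _ _ _ _ neq_AA'.
- exact: E3C_paths_d1 hrs j0 _ _ _ _ neq_AA'.
- exact: E3C_paths_d2 hrt k0 j0 _ _ _ _ neq_AA'.
Qed.
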